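(* For every positive integer $n$, $$\sum_{\lambda \in \mathcal{H}_n} t^{\mathrm{rep}(\lambda)} = \sum_{\lambda \in \mathcal{H}_n} t^{\mathrm{even}(\lambda)}$$ as polynomials in $t$.
   Context: A partition is a finite nonempty weakly decreasing sequence $\lambda=(\lambda_1,\ldots,\lambda_k)$ of positive integers; $\ell(\lambda)=k$ is its number of parts. The perimeter of $\lambda$ is $\Gamma(\lambda)=\lambda_1+\ell(\lambda)-1$, and $\mathcal{H}_n$ is the (finite) set of partitions with perimeter $n$. For a partition $\lambda$, $\mathrm{rep}(\lambda)=|\{1\le i\le \ell(\lambda)-1:\lambda_i=\lambda_{i+1}\}|$ and $\mathrm{even}(\lambda)=|\{1\le i\le \ell(\lambda): \lambda_i \text{ is even}\}|$. *)

From mathcomp Require Import all_boot all_order all_algebra.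
Set Implicit Arguments. Unset Strict Implicit. Unset Printing Implicit Defensive.
Import GRing.Theory.

Definition is_partition (l : seq nat) : bool :=
  [&& l != [::], all (fun x => 0 < x) l & sorted geq l].

Definition perimeter (l : seq nat) : nat := head 0 l + size l - 1.

Definition rep (l : seq nat) : nat :=
  count (fun i => nth 0 l i == nth 0 l i.+1) (iota 0 (size l).-1).

Definition even_parts (l : seq nat) : nat := count (fun x => ~~ odd x) l.

Fixpoint seqs_upto (n k : nat) : seq (seq nat) :=
  match k with
  | 0 => [:: [::]]
  | k'.+1 => [seq x :: s | x <- iota 1 n, s <- seqs_upto n k']
  end.

(* Every partition of perimeter n has length <= n and parts <= n, so
   H_n is the duplicate-free list of those candidates that are partitions
   of perimeter n. *)
Definition H (n : nat) : seq (seq nat) :=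
  [seq l <- flatten [seq seqs_upto n k | k <- iota 0 n.+1]
     | is_partition l && (perimeter l == n)].

From mathcomp Require Import all_boot all_order all_algebra zify.

(* Appending a part 1 raises rep by one exactly when the last part already was
   1 and keeps the even parts; adding 1 to every part keeps rep and exchanges
   even and odd parts.  Every partition of perimeter n+2 arises in exactly one
   way from one of perimeter n+1 by one of these two moves.  So the pair (A, B)
   of rep-sums over the partitions whose last part is / is not 1, and the pair
   (Q, P) of odd-part and even-part sums, obey the same recursion
   (x, y) |-> (t x + y, x + y); since (A, B) at perimeter 2 is (Q, P) at
   perimeter 1, A + B at perimeter n+1 is Q + P at perimeter n, which is P at
   perimeter n+1. *)

Set Implicit Arguments.
Unset Strict Implicit.
Unset Printing Implicit Defensive.

Import GRing.Theory.

Lemma sorted_geq_pairwise (l : seq nat) : sorted geq l = pairwise geq l.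
Proof. by apply: sorted_pairwise => y x z le_xy le_zx; apply: leq_trans le_zx le_xy. Qed.

Lemma is_partition_cons x s :
  is_partition (x :: s) = [&& 0 < x, all (fun y => 0 < y) s & pairwise geq (x :: s)].
Proof. by rewrite /is_partition sorted_geq_pairwise /= !andbA. Qed.

Lemma perimeter_cons x s : perimeter (x :: s) = x + size s.
Proof. by rewrite /perimeter /=; lia. Qed.

Lemma partition_le_head l : is_partition l -> all (fun y => y <= head 0 l) l.
Proof.
case: l => // x s; rewrite is_partition_cons /= leqnn.
by case/and4P=> _ _ ->.
Qed.

Lemma partition_ge_last l : is_partition l -> all (fun y => last 0 l <= y) l.
Proof.
case/lastP: l => // s y; rewrite /is_partition sorted_geq_pairwise last_rcons.
rewrite -cats1 pairwise_cat allrel1r !all_cat /= leqnn andbT.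
by case/and4P=> _ _ ->.
Qed.

Lemma partition_last_gt0 l : is_partition l -> 0 < last 0 l.
Proof. by case: l => // x s /and3P[_ pos_l _]; apply: (allP pos_l); apply: mem_last. Qed.

Lemma is_partition_rcons1 l : is_partition (rcons l 1) = (l == [::]) || is_partition l.
Proof.
rewrite /is_partition !sorted_geq_pairwise -cats1 all_cat pairwise_cat allrel1r /= !andbT.
by case: l => //= x s; rewrite andbA andbb.
Qed.

Lemma perimeter_rcons1 l : perimeter (rcons l 1) = (perimeter l).+1.
Proof. by case: l => // x s; rewrite rcons_cons !perimeter_cons size_rcons addnS. Qed.

Lemma perimeter_map_succ l : l != [::] -> perimeter (map succn l) = (perimeter l).+1.
Proof. by case: l => // x s _; rewrite map_cons !perimeter_cons size_map addSn. Qed.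

Lemma is_partition_map_succ l : is_partition l -> is_partition (map succn l).
Proof.
rewrite /is_partition (mono_sorted (fun x y => ltnS y x)) all_map.
by case: l => // x s /and3P[_ _ ->]; rewrite andbT; apply/allP.
Qed.

Lemma is_partition_map_pred l : is_partition l -> 1 < last 0 l -> is_partition (map predn l).
Proof.
move=> part_l last_gt1; have ge_last := partition_ge_last part_l.
case/and3P: part_l => nil_l _ sorted_l.
have sorted_pred : sorted geq (map predn l) by apply: homo_sorted sorted_l => x y /=; lia.
have pos_pred : all (fun y => 0 < y.-1) l by apply: sub_all ge_last => y /=; lia.
by rewrite /is_partition all_map pos_pred sorted_pred -size_eq0 size_map size_eq0 nil_l.
Qed.

Lemma map_succ_pred l : all (fun x => 0 < x) l -> map succn (map predn l) = l.
Proof. by rewrite -map_comp => /allP pos_l; apply: map_id_in => x /pos_l /prednK. Qed.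

Lemma last_map_succ l : l != [::] -> last 0 (map succn l) = (last 0 l).+1.
Proof. by case: l => // x s _; rewrite /= last_map. Qed.

(* [perim_parts n] lists the partitions of perimeter [n.+1]. *)
Fixpoint perim_parts n : seq (seq nat) :=
  if n is m.+1 then
    [seq rcons l 1 | l <- perim_parts m] ++ [seq map succn l | l <- perim_parts m]
  else [:: [:: 1]].

Lemma mem_perim_parts n (l : seq nat) :
  (l \in perim_parts n) = is_partition l && (perimeter l == n.+1).
Proof.
elim: n l => [|n IHn] l.
  rewrite inE; apply/eqP/andP => [-> // | [part_l /eqP]].
  case: l part_l => // x s; rewrite is_partition_cons perimeter_cons => /and3P[x_gt0 _ _].
  by case: s => [|y s] /=; [rewrite addn0 => -> | lia].
rewrite /= mem_cat; apply/orP/andP => [[] /mapP[m + ->] | [part_l /eqP perim_l]].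
- by rewrite IHn is_partition_rcons1 perimeter_rcons1 => /andP[-> /eqP ->]; rewrite orbT.
- rewrite IHn => /andP[part_m /eqP perim_m]; have /andP[m_nil _] := part_m.
  by rewrite is_partition_map_succ // perimeter_map_succ // perim_m.
have [last1 | last_ne1] := eqVneq (last 0 l) 1.
  left; apply/mapP; case/lastP: l last1 part_l perim_l => // m y.
  rewrite last_rcons => ->; rewrite is_partition_rcons1 perimeter_rcons1.
  case/orP=> [/eqP -> // | part_m] [perim_m].
  by exists m => //; rewrite IHn part_m perim_m eqxx.
have last_gt1 : 1 < last 0 l by have := partition_last_gt0 part_l; lia.
have /and3P[_ pos_l _] := part_l.
have part_pred := is_partition_map_pred part_l last_gt1.
have /andP[pred_nil _] := part_pred.
right; apply/mapP; exists (map predn l); last by rewrite map_succ_pred.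
by rewrite IHn part_pred -eqSS -perimeter_map_succ // map_succ_pred // perim_l eqxx.
Qed.

Lemma perim_parts_last_gt0 n l : l \in perim_parts n -> 0 < last 0 l.
Proof. by rewrite mem_perim_parts => /andP[/partition_last_gt0]. Qed.

Lemma last_map_succ_perim_parts n (l : seq nat) :
  l \in perim_parts n -> (last 0 (map succn l) == 1) = false.
Proof.
move=> /perim_parts_last_gt0 last_l; rewrite last_map_succ ?eqSS; last by case: l last_l.
by rewrite eqn0Ngt last_l.
Qed.

Lemma uniq_perim_parts n : uniq (perim_parts n).
Proof.
elim: n => //= n IHn.
rewrite cat_uniq (map_inj_uniq (@rcons_injl _ 1)) (map_inj_uniq (inj_map succn_inj)) IHn /=.
rewrite andbT; apply/hasPn => _ /mapP[m /perim_parts_last_gt0 last_m ->].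
apply/mapP => -[m' _ /(congr1 (last 0))].
have m_nil : m != [::] by case: m last_m.
by rewrite last_rcons last_map_succ // => -[last_m0]; rewrite last_m0 in last_m.
Qed.

Lemma mem_seqs_upto n k (l : seq nat) :
  (l \in seqs_upto n k) = (size l == k) && all (fun x => 0 < x <= n) l.
Proof.
elim: k l => [|k IHk] [|x s] //=; rewrite ?andbF //.
  by apply/negbTE/allpairsP => -[[y s'] []].
rewrite eqSS; apply/allpairsP/idP => [[[y s'] /= [y_in s'_in [-> ->]]] | ].
  by move: y_in s'_in; rewrite mem_iota add1n ltnS IHk => -> /andP[-> ->].
case/andP=> size_s /andP[x_le s_le]; exists (x, s).
by rewrite mem_iota add1n ltnS x_le IHk size_s.
Qed.

Lemma uniq_seqs_upto n k : uniq (seqs_upto n k).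
Proof.
elim: k => //= k IHk; apply: allpairs_uniq; rewrite ?iota_uniq //.
by move=> [x s] [y t] _ _ /= [-> ->].
Qed.

Lemma uniq_flatten_seqs_upto n ks : uniq ks -> uniq (flatten [seq seqs_upto n k | k <- ks]).
Proof.
elim: ks => //= k ks IHks /andP[k_notin uniq_ks].
rewrite cat_uniq uniq_seqs_upto IHks // andbT.
apply/hasPn => l /flatten_mapP[j j_in]; rewrite !mem_seqs_upto => /andP[/eqP size_l _].
by apply/negP => /andP[/eqP size_k _]; move: k_notin; rewrite -size_k size_l j_in.
Qed.

Lemma mem_H n (l : seq nat) : (l \in H n) = is_partition l && (perimeter l == n).
Proof.
rewrite mem_filter; apply/andb_idr => /andP[part_l /eqP perim_l].
have le_head := partition_le_head part_l.
case: l part_l perim_l le_head => // x s; rewrite is_partition_cons perimeter_cons /=.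
case/and3P=> x_gt0 pos_s _ <- /andP[_ le_x]; apply/flatten_mapP; exists (size s).+1.
  by rewrite mem_iota; lia.
rewrite mem_seqs_upto /= eqxx x_gt0 leq_addr /=.
by apply/allP => y y_in; move: (allP pos_s y y_in) (allP le_x y y_in) => /=; lia.
Qed.

Lemma perm_H_perim_parts n : perm_eq (H n.+1) (perim_parts n).
Proof.
apply: uniq_perm; first exact/filter_uniq/uniq_flatten_seqs_upto/iota_uniq.
  exact: uniq_perim_parts.
by move=> l; rewrite mem_H mem_perim_parts.
Qed.

Lemma rep_cons_cons x y s : rep [:: x, y & s] = (x == y) + rep (y :: s).
Proof. by rewrite /rep /= -[1]/(1 + 0) iotaDl count_map. Qed.

Lemma rep_rcons l z : rep (rcons l z.+1) = rep l + (last 0 l == z.+1).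
Proof.
elim: l => [|x [|y s] IHl] //; first by rewrite rep_cons_cons addn0.
by rewrite !rcons_cons !rep_cons_cons -rcons_cons IHl addnA.
Qed.

Lemma rep_map_succ l : rep (map succn l) = rep l.
Proof. by elim: l => [|x [|y s] IHl] //; rewrite map_cons !rep_cons_cons eqSS -IHl. Qed.

Lemma even_parts_rcons1 l : even_parts (rcons l 1) = even_parts l.
Proof. by rewrite /even_parts -cats1 count_cat addn0. Qed.

Lemma count_odd_rcons1 l : count odd (rcons l 1) = (count odd l).+1.
Proof. by rewrite -cats1 count_cat addn1. Qed.

Lemma even_parts_map_succ l : even_parts (map succn l) = count odd l.
Proof. by rewrite /even_parts count_map; apply: eq_count => x /=; rewrite negbK. Qed.

Lemma count_odd_map_succ l : count odd (map succn l) = even_parts l.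
Proof. by rewrite count_map. Qed.

Section GeneratingFunctions.
Variables (R : pzSemiRingType) (t : R).
Local Open Scope ring_scope.

Lemma big_perim_partsS (P : pred (seq nat)) (F : seq nat -> R) n :
  \sum_(l <- perim_parts n.+1 | P l) F l =
  \sum_(l <- perim_parts n | P (rcons l 1)) F (rcons l 1) +
  \sum_(l <- perim_parts n | P (map succn l)) F (map succn l).
Proof. by rewrite big_cat !big_map. Qed.

Definition rep_last1_sum n := \sum_(l <- perim_parts n | last 0%N l == 1%N) t ^+ rep l.
Definition rep_last_ne1_sum n := \sum_(l <- perim_parts n | last 0%N l != 1%N) t ^+ rep l.
Definition even_sum n := \sum_(l <- perim_parts n) t ^+ even_parts l.
Definition odd_sum n := \sum_(l <- perim_parts n) t ^+ count odd l.

Lemma sum_rep_perim_partsE n :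
  \sum_(l <- perim_parts n) t ^+ rep l = rep_last1_sum n + rep_last_ne1_sum n.
Proof. exact: bigID. Qed.

Lemma rep_last1_sumS n : rep_last1_sum n.+1 = t * rep_last1_sum n + rep_last_ne1_sum n.
Proof.
rewrite /rep_last1_sum /rep_last_ne1_sum big_perim_partsS.
rewrite [X in _ + X]big_seq_cond big_pred0 ?addr0 => [|l]; last first.
  by case l_in: (l \in _); rewrite //= (last_map_succ_perim_parts l_in).
rewrite (eq_bigl predT) => [|l]; last by rewrite last_rcons.
rewrite (bigID (fun l => last 0%N l == 1%N)) big_distrr /=.
congr (_ + _); apply: eq_bigr => l; rewrite rep_rcons.
  by move=> /eqP ->; rewrite addn1 exprS.
by move=> /negbTE ->; rewrite addn0.
Qed.

Lemma rep_last_ne1_sumS n : rep_last_ne1_sum n.+1 = rep_last1_sum n + rep_last_ne1_sum n.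
Proof.
rewrite /rep_last_ne1_sum big_perim_partsS.
rewrite big_pred0 ?add0r => [|l]; last by rewrite last_rcons.
rewrite -sum_rep_perim_partsE big_seq_cond [RHS]big_seq_cond.
apply: eq_big => [l|l _]; last by rewrite rep_map_succ.
by case l_in: (l \in _); rewrite //= (last_map_succ_perim_parts l_in).
Qed.

Lemma even_sumS n : even_sum n.+1 = even_sum n + odd_sum n.
Proof.
rewrite /even_sum big_perim_partsS.
congr (_ + _); apply: eq_bigr => l _; first by rewrite even_parts_rcons1.
by rewrite even_parts_map_succ.
Qed.

Lemma odd_sumS n : odd_sum n.+1 = t * odd_sum n + even_sum n.
Proof.
rewrite /odd_sum big_perim_partsS big_distrr.
congr (_ + _); apply: eq_bigr => l _; first by rewrite count_odd_rcons1 exprS.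
by rewrite count_odd_map_succ.
Qed.

Lemma rep_last_sumsS_odd_even n :
  rep_last1_sum n.+1 = odd_sum n /\ rep_last_ne1_sum n.+1 = even_sum n.
Proof.
elim: n => [|n [IH1 IH2]].
  rewrite rep_last1_sumS rep_last_ne1_sumS.
  rewrite /rep_last1_sum /rep_last_ne1_sum /odd_sum /even_sum !big_cons !big_nil /rep /=.
  by rewrite !addr0 addn0 expr0 mulr1 expr1.
rewrite rep_last1_sumS (rep_last_ne1_sumS n.+1) IH1 IH2 odd_sumS even_sumS.
by split; last exact: addrC.
Qed.

Lemma sum_rep_even_perim_parts n :
  \sum_(l <- perim_parts n) t ^+ rep l = \sum_(l <- perim_parts n) t ^+ even_parts l.
Proof.
case: n => [|n]; first by rewrite /= !big_seq1.
rewrite sum_rep_perim_partsE -[RHS]/(even_sum n.+1).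
by have [-> ->] := rep_last_sumsS_odd_even n; rewrite even_sumS addrC.
Qed.

End GeneratingFunctions.

Local Open Scope ring_scope.

Theorem theorem1p3 (n : nat) : (0 < n)%N ->
  \sum_(l <- H n) ('X : {poly int}) ^+ rep l =
  \sum_(l <- H n) ('X : {poly int}) ^+ even_parts l.
Proof.
case: n => // n _.
by rewrite !(perm_big _ (perm_H_perim_parts n)) sum_rep_even_perim_parts.
Qed.
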